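(* Let $(\Xi,\mathcal{F},P)$ be a probability space and $\{y_t\}_{t\in\mathbb{Z}}$ a real, mean-zero, covariance-stationary series on it; put $\mathcal{F}_t=\sigma(y_s,\,s\le t)$. Assume (D1) $P\{y_1^2>0\}=1$; (D2) $y_t=\sum_{s=0}^{\infty}\kappa_s\epsilon_{t-s}$ with $\kappa_0=1$, $\sum_s|\kappa_s|<\infty$, $\kappa(z)=\sum_s\kappa_s z^s\neq 0$ for $|z|\le 1$, where $\{\epsilon_t\}$ is a martingale difference sequence with respect to $\{\mathcal{F}_t\}$; (D3) $E[\epsilon_t^2\mid\mathcal{F}_{t-1}]=\sigma_\epsilon^2$ a.s. (constant); (D4) $\sup_t|\epsilon_t|\le K<\infty$ a.s. Fix $\beta\in[0,1]$, let $\theta_t$ be generated by the recursive algorithm in the context, and assume there are random variables $k^*$ (integer, $0\le k^*<\infty$) and $K^*\in(0,1)$ such that a.s. $|\theta_{t+k^*}|\le K^*$ for all $t\ge1$. Then for each integer $u\ge0$ and each (possibly random) integer $0\le k^*<\infty$, $$\frac{\sigma_\epsilon^2}{t}\sum_{s=1}^t\sum_{j=0}^u\big(\kappa_j^\phi(s)\big)^2=\frac{\sigma_\epsilon^2}{t}\sum_{s=1}^t\sum_{j=0}^u\Big(\sum_{l=0}^j(-\theta_{s+k^*})^l\sum_{p=0}^{j-l}(-\beta\theta_{s+k^*})^p\kappa_{j-l-p}\Big)^2+o_{a.s.}(1).$$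
   Context: Recursive algorithm: set $\theta_1=0$, $\bar P_1=0$, $e_1=y_1$, $x_1=y_1$, $\phi_1=x_1$, and for $t\ge2$: $x_t=y_t-\beta\theta_{t-1}x_{t-1}$; $e_t=y_t-\theta_{t-1}e_{t-1}$; $\phi_t=x_t-\theta_{t-1}\phi_{t-1}$; $\bar P_t=\frac1t\sum_{s=1}^{t-1}\phi_s^2$; $\theta_t=\theta_{t-1}+\bar P_t^{-1}\frac1t\phi_{t-1}e_t$. Coefficients: for $t\ge1$, $j\ge0$ (empty products equal 1), $\kappa_j^x(t)=\sum_{l=0}^{\min(j,t-1)}(-\beta)^l\kappa_{j-l}\prod_{i=1}^l\theta_{t-i}$; $\kappa_j^\phi(1)=\kappa_j$ and $\kappa_j^\phi(t)=\kappa_j^x(t)-\theta_{t-1}\kappa_{j-1}^\phi(t-1)$ for $t\ge2$, with $\kappa_{-1}^\phi(\cdot):=0$; these are the coefficients in $\phi_t=\sum_{j\ge0}\kappa_j^\phi(t)\epsilon_{t-j}$. The notation $o_{a.s.}(1)$ denotes a term converging to $0$ almost surely as $t\to\infty$. *)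

From HB Require Import structures.
From mathcomp Require Import all_boot all_order all_algebra.
From mathcomp Require Import all_classical all_reals all_analysis.
From mathcomp Require Import complex.
Set Implicit Arguments. Unset Strict Implicit. Unset Printing Implicit Defensive.
Import Order.TTheory GRing.Theory Num.Theory.
Import numFieldNormedType.Exports.
Local Open Scope classical_set_scope.
Local Open Scope ring_scope.

Section Defs.
Variable R : realType.

Record algo_state := AlgoState {
  st_theta : R; st_e : R; st_x : R; st_phi : R; st_S : R }.

(* algo y beta n = state at time t = n+1 *)
Fixpoint algo (y : nat -> R) (beta : R) (n : nat) : algo_state :=
  match n with
  | 0 => AlgoState 0 (y 1%N) (y 1%N) (y 1%N) (y 1%N ^+ 2)
  | n'.+1 =>
      let st := algo y beta n' in
      let t := n'.+2 in
      let th := st_theta st in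
      let x := y t - beta * th * st_x st in
      let e := y t - th * st_e st in
      let phi := x - th * st_phi st in
      let Pbar := (t%:R)^-1 * st_S st in
      let th' := th + Pbar^-1 * (t%:R)^-1 * st_phi st * e in
      AlgoState th' e x phi (st_S st + phi ^+ 2)
  end.

(* theta_t for t >= 1 (theta 0 is an unused dummy value = theta_1 = 0) *)
Definition theta (y : nat -> R) (beta : R) (t : nat) : R :=
  st_theta (algo y beta t.-1).

Definition kappa_x (th : nat -> R) (kappa : nat -> R) (beta : R)
    (t j : nat) : R :=
  \sum_(0 <= l < (minn j t.-1).+1)
     (- beta) ^+ l * kappa (j - l)%N * \prod_(1 <= i < l.+1) th (t - i)%N.

(* kappa_phi_aux n j = kappa^phi_j(n+1) *)
Fixpoint kappa_phi_aux (th : nat -> R) (kappa : nat -> R) (beta : R)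
    (n j : nat) : R :=
  match n with
  | 0 => kappa j
  | n'.+1 => kappa_x th kappa beta n'.+2 j
             - th n'.+1 * (if j is j'.+1 then kappa_phi_aux th kappa beta n' j'
                           else 0)
  end.

Definition kappa_phi th kappa beta (t j : nat) : R :=
  kappa_phi_aux th kappa beta t.-1 j.

Definition kappa_lim (kappa : nat -> R) (beta th : R) (j : nat) : R :=
  \sum_(0 <= l < j.+1) (- th) ^+ l *
     \sum_(0 <= p < (j - l).+1) (- (beta * th)) ^+ p * kappa (j - l - p)%N.

End Defs.

Section Prob.
Context {d : measure_display} {Omega : measurableType d} {R : realType}.

Definition natfilt (y : int -> Omega -> R) (t : int) : set (set Omega) :=
  <<s [set: Omega],
      [set A | exists s : int, exists B : set R,
                 (s <= t)%R /\ measurable B /\ A = y s @^-1` B] >>.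

End Prob.

From HB Require Import structures.
From mathcomp Require Import all_boot all_order all_algebra.
From mathcomp Require Import all_classical all_reals all_analysis.
From mathcomp Require Import complex.
From mathcomp Require Import lra ring zify measurable_realfun.
Import Order.TTheory GRing.Theory Num.Theory.
Import numFieldNormedType.Exports.
Local Open Scope classical_set_scope.
Local Open Scope ring_scope.

Set Implicit Arguments. Unset Strict Implicit. Unset Printing Implicit Defensive.

(* Both sides are Cesaro means, so it suffices that for each j the coefficient
   kappa^phi_j(s) minus the limit coefficient at theta_{s+k} tends to 0.
   Unrolling the recursions, kappa^phi_j(s) is a polynomial in
   theta_{s-1}, ..., theta_{s-j} which, once all these arguments are set to a
   common value, is the limit coefficient; hence the claim holds along every
   bounded path theta whose increments theta_{t+1} - theta_t vanish.
   The increment is phi_t e_{t+1} / sum_{s <= t} phi_s^2.  Once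
   |theta_t| <= K* < 1, the sequences x, e and phi obey contracting linear
   recursions driven by the bounded y, so the numerator is bounded; and since
   y_t is a combination of phi_t, phi_{t-1}, phi_{t-2} with bounded weights,
   the denominator diverges as soon as |y_t| >= c infinitely often.
   That last fact holds almost surely: given F_{t-1}, the innovation eps_t is
   bounded by K, centred, with variance sigma^2, so with conditional
   probability at least sigma^2 / (4 K^2) it exceeds delta in the direction
   of the F_{t-1}-measurable part of y_t, which forces |y_t| >= delta / 2;
   thus P(|y_{n+i}| < delta / 2 for all i < m) <= (1 - sigma^2/(4 K^2))^m.
   When sigma^2 = 0 both sides vanish. *)

Section bounded_near_algebra.
Context {T : Type} {K : numFieldType} {F : set_system T} {PF : ProperFilter F}.
Implicit Types f g : T -> K.

Lemma bounded_near_cst (c : K) : bounded_near (fun=> c) F.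
Proof. by apply/ex_bound; exists `|c|; apply: filterE => x /=. Qed.

Lemma bounded_nearD f g :
  bounded_near f F -> bounded_near g F -> bounded_near (fun x => f x + g x) F.
Proof.
move=> /ex_bound[M fM] /ex_bound[N gN]; apply/ex_bound; exists (M + N).
by apply: filterS2 fM gN => x /= fxM gxN; rewrite (le_trans (ler_normD _ _)) ?lerD.
Qed.

Lemma bounded_nearN f : bounded_near f F -> bounded_near (fun x => - f x) F.
Proof. by apply: sub_boundedl; apply: nearW => x; rewrite normrN. Qed.

Lemma bounded_nearM f g :
  bounded_near f F -> bounded_near g F -> bounded_near (fun x => f x * g x) F.
Proof.
move=> /ex_bound[M fM] /ex_bound[N gN]; apply/ex_bound; exists (M * N).
by apply: filterS2 fM gN => x /= fxM gxN; rewrite normrM ler_pM.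
Qed.

Lemma bounded_nearX f n : bounded_near f F -> bounded_near (fun x => f x ^+ n) F.
Proof.
move=> bf; elim: n => [|n IH]; first exact: bounded_near_cst.
by under [fun x => _]funext do rewrite exprS; exact: bounded_nearM.
Qed.

Lemma bounded_near_sum (I : Type) (r : seq I) (P : pred I) (G : I -> T -> K) :
  (forall i, bounded_near (G i) F) ->
  bounded_near (fun x => \sum_(i <- r | P i) G i x) F.
Proof.
move=> bG; elim: r => [|i r IH].
  by under [fun x => _]funext do rewrite big_nil; exact: bounded_near_cst.
under [fun x => _]funext do rewrite big_cons.
by case: (P i) => //; exact: bounded_nearD.
Qed.

Lemma cvg0_mul_bounded f g :
  f @ F --> 0 -> bounded_near g F -> (fun x => f x * g x) @ F --> 0.
Proof.
move=> f0 /ex_strict_bound_gt0[M M0 gM]; apply/cvgr0Pnorm_le => e e0.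
move/cvgr0Pnorm_le : f0 => /(_ (e / M)) /(_ (divr_gt0 e0 M0)) fe.
apply: filterS2 fe gM => x /= fxe gxM; rewrite normrM.
by rewrite -(divfK (lt0r_neq0 M0) e) ler_pM // ltW.
Qed.

Lemma cvg0_sum (I : Type) (r : seq I) (P : pred I) (G : I -> T -> K) :
  (forall i, G i @ F --> 0) -> (fun x => \sum_(i <- r | P i) G i x) @ F --> 0.
Proof.
move=> G0; elim: r => [|i r IH].
  by apply: cvg_near_cst; apply: nearW => x; rewrite big_nil.
have -> : (fun x => \sum_(j <- i :: r | P j) G j x) =
    fun x => (if P i then G i x else 0) + \sum_(j <- r | P j) G j x.
  by apply/funext => x; rewrite big_cons; case: (P i); rewrite ?add0r.
rewrite -[X in _ --> X]addr0; apply: cvgD => //.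
by case: (P i); [exact: G0 | exact: cvg_cst].
Qed.

End bounded_near_algebra.

Lemma bounded_near_comp {T U : Type} {K : numFieldType} (F : set_system T)
    (G : set_system U) (h : T -> U) (f : U -> K) :
  h @ F --> G -> bounded_near f G -> bounded_near (f \o h) F.
Proof. by move=> hFG; rewrite /bounded_near; apply: filterS => M /hFG. Qed.

Lemma mean_cvg0 (R : realType) (v : nat -> R) : v @ \oo --> 0 ->
  (fun t => t%:R^-1 * \sum_(1 <= s < t.+1) v s) @ \oo --> 0.
Proof.
move=> v0; rewrite -cvg_shiftS /=.
have -> : (fun t => t.+1%:R^-1 * \sum_(1 <= s < t.+2) v s) =
    arithmetic_mean (fun s => v s.+1).
  by apply/funext => t; rewrite /arithmetic_mean /series /= big_add1.
by apply: cesaro; rewrite cvg_shiftS.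
Qed.

(* [kappa_x] with all the [theta]'s frozen at the value [x] *)
Definition kappa_x_lim (R : realType) (kappa : nat -> R) (beta x : R) (j : nat) :=
  \sum_(0 <= p < j.+1) (- (beta * x)) ^+ p * kappa (j - p)%N.

Section kappa_lim_theory.
Variables (R : realType) (kappa : nat -> R) (beta : R).

Lemma kappa_lim0 x : kappa_lim kappa beta x 0 = kappa 0%N.
Proof. by rewrite /kappa_lim !big_nat1 subnn !expr0 !mul1r. Qed.

Lemma kappa_limS x j :
  kappa_lim kappa beta x j.+1 =
  kappa_x_lim kappa beta x j.+1 - x * kappa_lim kappa beta x j.
Proof.
rewrite /kappa_lim big_nat_recl //= expr0 mul1r subn0; congr (_ + _).
rewrite mulr_sumr -sumrN; apply: eq_bigr => l _.
by rewrite subSS exprS; ring.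
Qed.

Lemma kappa_lim_bounded (T : Type) (F : set_system T) {PF : ProperFilter F}
    (x : T -> R) j :
  bounded_near x F -> bounded_near (fun t => kappa_lim kappa beta (x t) j) F.
Proof.
move=> bx; apply: bounded_near_sum => l.
apply: bounded_nearM; first exact/bounded_nearX/bounded_nearN.
apply: bounded_near_sum => p; apply: bounded_nearM; last exact: bounded_near_cst.
exact/bounded_nearX/bounded_nearN/bounded_nearM/bx/bounded_near_cst.
Qed.

End kappa_lim_theory.

Section slowly_varying_coefficients.
Variables (R : realType) (th kappa : nat -> R) (beta : R).
Hypothesis th_bounded : bounded_near th \oo.
Hypothesis th_increment_cvg0 : (fun n => th n.+1 - th n) @ \oo --> 0.

Lemma th_shift_cvg0 a b : (fun n => th (n + a) - th (n + b)) @ \oo --> 0.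
Proof.
suff th_shift0 c : (fun n => th (n + c) - th n) @ \oo --> 0.
  rewrite -[X in _ --> X]subr0 (_ : (fun n => _) =
      (fun n => (th (n + a) - th n) - (th (n + b) - th n))); first exact: cvgB.
  by apply/funext => n; ring.
elim: c => [|c IH].
  by under [fun n => _]funext do rewrite addn0 subrr; exact: cvg_cst.
rewrite -[X in _ --> X]addr0 (_ : (fun n => _) =
    (fun n => (th (n + c).+1 - th (n + c)) + (th (n + c) - th n))).
  by apply: cvgD => //; rewrite (cvg_shiftn c (fun n => th n.+1 - th n)).
by apply/funext => n; rewrite addnS; ring.
Qed.

Let th_addn_bounded a : bounded_near (fun n => th (n + a)) \oo.
Proof. exact: bounded_near_comp (cvg_addnr a) th_bounded. Qed.

Lemma prod_th_cvg0 l a b :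
  (fun n => \prod_(1 <= i < l.+1) th (n + b - i)%N - th (n + a) ^+ l) @ \oo --> 0.
Proof.
elim: l => [|l IH].
  by under [fun n => _]funext do rewrite big_geq // expr0 subrr; exact: cvg_cst.
have th_near (c : nat) : (fun n => th (n + b - c)%N - th (n + a)) @ \oo --> 0.
  rewrite -(cvg_shiftn c) /=.
  under [fun n => _]funext do rewrite addnAC addnK -addnA.
  exact: th_shift_cvg0.
rewrite -[X in _ --> X]addr0 (_ : (fun n => _) = fun n =>
   (\prod_(1 <= i < l.+1) th (n + b - i)%N - th (n + a) ^+ l) * th (n + b - l.+1)%N
   + th (n + a) ^+ l * (th (n + b - l.+1)%N - th (n + a))); last first.
  by apply/funext => n; rewrite big_nat_recr //= exprSr; ring.
have th_subn_bounded c : bounded_near (fun n => th (n + b - c)%N) \oo.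
  exact: bounded_near_comp (cvg_comp _ _ (cvg_addnr b) (cvg_subnr c)) th_bounded.
have thX_bounded : bounded_near (fun n => th (n + a) ^+ l) \oo.
  exact/bounded_nearX/th_addn_bounded.
apply: cvgD; first exact: (cvg0_mul_bounded IH).
under [fun n => _]funext do rewrite mulrC.
exact: (cvg0_mul_bounded (th_near l.+1)).
Qed.

Lemma kappa_x_cvg j a b :
  (fun n => kappa_x th kappa beta (n + b) j
            - kappa_x_lim kappa beta (th (n + a)) j) @ \oo --> 0.
Proof.
pose d l n := (\prod_(1 <= i < l.+1) th (n + b - i)%N - th (n + a) ^+ l) *
  ((- beta) ^+ l * kappa (j - l)%N).
have eq_d : \forall n \near \oo, \sum_(0 <= l < j.+1) d l n =
    kappa_x th kappa beta (n + b) j - kappa_x_lim kappa beta (th (n + a)) j.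
  near=> n.
  have jn : (j.+1 <= n)%N by near: n; exact: nbhs_infty_ge.
  rewrite /kappa_x (_ : minn j (n + b).-1 = j); last by lia.
  rewrite /kappa_x_lim -sumrB; apply: eq_bigr => l _.
  by rewrite /d -[- (beta * _)]mulNr exprMn; ring.
apply: cvg_trans (near_eq_cvg eq_d) _; apply: cvg0_sum => l.
exact: cvg0_mul_bounded (prod_th_cvg0 l a b) (bounded_near_cst _).
Unshelve. all: by end_near.
Qed.

Lemma kappa_phi_aux_cvg j a :
  (fun n => kappa_phi_aux th kappa beta n j
            - kappa_lim kappa beta (th (n + a)) j) @ \oo --> 0.
Proof.
elim: j a => [|j IH] a.
  apply: cvg_near_cst; near=> n.
  have n0 : (0 < n)%N by near: n; exact: nbhs_infty_gt.
  rewrite -(prednK n0) kappa_lim0 /= /kappa_x min0n big_nat1 big_geq // expr0 mul1r mulr1.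
  by rewrite subn0 mulr0 subr0 subrr.
have lim_bounded : bounded_near (fun n => kappa_lim kappa beta (th (n + a.+1)) j) \oo.
  exact/kappa_lim_bounded/th_addn_bounded.
rewrite -cvg_shiftS /= (_ : (fun n => _) = fun n =>
    (kappa_x th kappa beta (n + 2) j.+1 - kappa_x_lim kappa beta (th (n + a.+1)) j.+1)
    - (kappa_phi_aux th kappa beta n j - kappa_lim kappa beta (th (n + a.+1)) j)
      * th (n + 1)
    - (th (n + 1) - th (n + a.+1)) * kappa_lim kappa beta (th (n + a.+1)) j); last first.
  by apply/funext => n; rewrite kappa_limS addn2 addn1 addSnnS; ring.
have := cvgB (cvgB (kappa_x_cvg j.+1 a.+1 2)
  (cvg0_mul_bounded (IH a.+1) (th_addn_bounded 1)))
  (cvg0_mul_bounded (th_shift_cvg0 1 a.+1) lim_bounded).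
by rewrite !subr0 => h; exact: h.
Unshelve. all: by end_near.
Qed.

Lemma kappa_phi_cvg j a :
  (fun t => kappa_phi th kappa beta t j
            - kappa_lim kappa beta (th (t + a)) j) @ \oo --> 0.
Proof.
rewrite -cvg_shiftS /=; under [fun t => _]funext do rewrite addSnnS.
exact: kappa_phi_aux_cvg.
Qed.

Lemma sum_sqr_kappa_phi_cvg u k :
  (fun t => \sum_(0 <= j < u.+1) (kappa_phi th kappa beta t j ^+ 2
            - kappa_lim kappa beta (th (t + k)) j ^+ 2)) @ \oo --> 0.
Proof.
apply: cvg0_sum => j /=.
pose phi t := kappa_phi th kappa beta t j.
pose lim t := kappa_lim kappa beta (th (t + k)) j.
have phi_lim : (fun t => phi t - lim t) @ \oo --> 0 := kappa_phi_cvg j k.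
have lim_bounded : bounded_near lim \oo.
  exact/kappa_lim_bounded/th_addn_bounded.
rewrite (_ : (fun t => _) = fun t => (phi t - lim t) * ((phi t - lim t) + 2 * lim t)).
  apply: (cvg0_mul_bounded phi_lim).
  apply: bounded_nearD; first exact: cvg_bounded phi_lim.
  by apply: bounded_nearM => //; exact: bounded_near_cst.
by apply/funext => t; rewrite /phi /lim; ring.
Qed.

Lemma mean_sum_sqr_kappa_phi_cvg (c : R) u k :
  (fun t => c / t%:R * \sum_(1 <= s < t.+1) \sum_(0 <= j < u.+1)
              kappa_phi th kappa beta s j ^+ 2
          - c / t%:R * \sum_(1 <= s < t.+1) \sum_(0 <= j < u.+1)
              kappa_lim kappa beta (th (s + k)) j ^+ 2) @ \oo --> 0.
Proof.
rewrite (_ : (fun t => _) = fun t => t%:R^-1 * (\sum_(1 <= s < t.+1)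
    \sum_(0 <= j < u.+1) (kappa_phi th kappa beta s j ^+ 2
                         - kappa_lim kappa beta (th (s + k)) j ^+ 2)) * c).
  exact: (cvg0_mul_bounded (mean_cvg0 (sum_sqr_kappa_phi_cvg u k)) (bounded_near_cst c)).
apply/funext => t; rewrite -mulrBr -sumrB [RHS]mulrC mulrA.
by under eq_bigr do rewrite -sumrB.
Qed.

End slowly_varying_coefficients.

Lemma affine_rec_bounded (R : realType) (a : nat -> R) (A B : R) n0 :
  0 <= A -> 0 <= B < 1 ->
  (forall n, (n0 <= n)%N -> `|a n.+1| <= A + B * `|a n|) ->
  exists C, forall n, (n0 <= n)%N -> `|a n| <= C.
Proof.
move=> A0 /andP[B0 B1] rec.
have B1' : 0 < 1 - B by rewrite subr_gt0.
pose z := A / (1 - B).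
have Az : A = z - B * z by rewrite /z; field; rewrite lt0r_neq0.
have z0 : 0 <= z by rewrite divr_ge0 // ltW.
exists (`|a n0| + z) => n /subnK <-; elim: (n - n0)%N => [|k IH].
  by rewrite add0n lerDl.
rewrite addSn; apply: (le_trans (rec _ (leq_addl _ _))).
have := normr_ge0 (a n0); have : B * `|a (k + n0)%N| <= B * (`|a n0| + z).
  by rewrite ler_wpM2l.
nra.
Qed.

Section recursive_algorithm.
Variables (R : realType) (yv : nat -> R) (beta : R).
Local Notation th_ n := (st_theta (algo yv beta n)).
Local Notation e_ n := (st_e (algo yv beta n)).
Local Notation x_ n := (st_x (algo yv beta n)).
Local Notation phi_ n := (st_phi (algo yv beta n)).
Local Notation S_ n := (st_S (algo yv beta n)).

Lemma algo_thetaS n : th_ n.+1 = th_ n + (S_ n)^-1 * phi_ n * e_ n.+1.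
Proof.
(* the factors 1/t in [Pbar_t] and in the update cancel *)
have inv_mean (a s : R) : a != 0 -> (a^-1 * s)^-1 * a^-1 = s^-1.
  by move=> a0; rewrite invfM invrK mulrAC mulfV // mul1r.
by rewrite [LHS]/= inv_mean // pnatr_eq0.
Qed.

Lemma algo_S_ge0 n : 0 <= S_ n.
Proof. by elim: n => [|n IH] /=; rewrite ?addr_ge0 ?sqr_ge0. Qed.

Lemma algo_S_le m n : (m <= n)%N -> S_ m <= S_ n.
Proof.
move=> /subnK <-; elim: (n - m)%N => [|k IH] //.
by rewrite addSn (le_trans IH) //= lerDl sqr_ge0.
Qed.

Hypothesis beta01 : 0 <= beta <= 1.
Variables (M c Ks : R) (n0 : nat).
Hypothesis y_bounded : forall n, `|yv n| <= M.
Hypothesis c_gt0 : 0 < c.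
Hypothesis y_infinitely_often_ge : forall n, exists m, (n <= m)%N /\ c <= `|yv m|.
Hypothesis Ks_lt1 : Ks < 1.
Hypothesis theta_le : forall n, (n0 <= n)%N -> `|th_ n| <= Ks.

Let M_ge0 : 0 <= M. Proof. exact: le_trans (normr_ge0 _) (y_bounded 0). Qed.
Let Ks01 : 0 <= Ks < 1.
Proof. by rewrite Ks_lt1 andbT (le_trans (normr_ge0 _) (theta_le (leqnn n0))). Qed.
Let beta_le1 : `|beta| <= 1. Proof. by case/andP: beta01 => b0 b1; rewrite ger0_norm. Qed.

Lemma algo_x_bounded : exists C, forall n, (n0 <= n)%N -> `|x_ n| <= C.
Proof.
apply: (affine_rec_bounded M_ge0 Ks01) => n n0n /=.
rewrite (le_trans (ler_normB _ _)) // lerD // !normrM ler_wpM2r //.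
by rewrite -[Ks]mul1r; apply: ler_pM => //; exact: theta_le.
Qed.

Lemma algo_e_bounded : exists C, forall n, (n0 <= n)%N -> `|e_ n| <= C.
Proof.
apply: (affine_rec_bounded M_ge0 Ks01) => n n0n /=.
by rewrite (le_trans (ler_normB _ _)) // lerD // normrM ler_wpM2r // theta_le.
Qed.

Lemma algo_phi_bounded : exists C, forall n, (n0 <= n)%N -> `|phi_ n| <= C.
Proof.
have [C xC] := algo_x_bounded.
have C0 : 0 <= C by exact: le_trans (normr_ge0 _) (xC _ (leqnn n0)).
apply: (affine_rec_bounded C0 Ks01) => n n0n /=.
apply: le_trans (ler_normB _ _) _; apply: lerD; first exact: xC n.+1 (leqW n0n).
by rewrite normrM ler_wpM2r // theta_le.
Qed.

Lemma algo_y_phi m : yv m.+3 = phi_ m.+2 + (1 + beta) * th_ m.+1 * phi_ m.+1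
                                + beta * th_ m.+1 * th_ m * phi_ m.
Proof. by rewrite /=; ring. Qed.

Lemma algo_S_jump n : (n0 <= n.+1)%N -> c <= `|yv n.+4| ->
  S_ n + c ^+ 2 / 6 <= S_ n.+3.
Proof.
move=> n0n cy.
have th1 : `|th_ n.+1| <= 1 by rewrite (le_trans (theta_le n0n)) // ltW.
have th2 : `|th_ n.+2| <= 1 by rewrite (le_trans (theta_le (leqW n0n))) // ltW.
have -> : S_ n.+3 = S_ n + phi_ n.+1 ^+ 2 + phi_ n.+2 ^+ 2 + phi_ n.+3 ^+ 2.
  by rewrite /=; ring.
rewrite -!(real_normK (num_real (phi_ _))).
set u := `|phi_ n.+1|; set v := `|phi_ n.+2|; set w := `|phi_ n.+3|.
have y_le : `|yv n.+4| <= w + 2 * v + u.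
  rewrite algo_y_phi; apply: le_trans (ler_normD _ _) _; apply: lerD; last first.
    rewrite !normrM -[X in _ <= X]mul1r ler_wpM2r //.
    by rewrite -[1]mul1r ler_pM // -[1]mul1r ler_pM.
  have b2 : `|1 + beta| <= 2.
    by have := ler_normD 1 beta; have := beta_le1; rewrite normr1; lra.
  apply: le_trans (ler_normD _ _) _; rewrite lerD // !normrM ler_wpM2r //.
  by rewrite -[2]mulr1 ler_pM.
have [u0 v0 w0] : [/\ 0 <= u, 0 <= v & 0 <= w] by split; exact: normr_ge0.
have : c ^+ 2 <= (w + 2 * v + u) ^+ 2.
  rewrite ler_sqr ?nnegrE ?(ltW c_gt0) ?addr_ge0 ?mulr_ge0 //.
  exact: le_trans cy y_le.
(* Cauchy-Schwarz with weights (1, 2, 1), whose squares sum to 6 *)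
have := sqr_ge0 (2 * u - v); have := sqr_ge0 (2 * w - v); have := sqr_ge0 (u - w).
rewrite !expr2; lra.
Qed.

Lemma algo_S_unbounded (B : R) : exists m, B <= S_ m.
Proof.
have c6 : 0 < c ^+ 2 / 6 by rewrite divr_gt0 // exprn_gt0.
have S_ge k : exists m, k%:R * (c ^+ 2 / 6) <= S_ m.
  elim: k => [|k [m Sm]]; first by exists 0%N; rewrite mul0r algo_S_ge0.
  have [p [mp cy]] := y_infinitely_often_ge (m + n0).+4.
  rewrite (_ : p = (p - 4).+4) in cy; last by lia.
  exists (p - 4).+3; apply: le_trans (algo_S_jump _ cy); last by lia.
  have : S_ m <= S_ (p - 4) by apply: algo_S_le; lia.
  by rewrite -natr1 mulrDl mul1r; lra.
have [k Bk] : exists k : nat, B / (c ^+ 2 / 6) < k%:R.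
  by exists (Num.truncn (B / (c ^+ 2 / 6))).+1; rewrite truncnS_gt.
have [m km] := S_ge k; exists m; apply: le_trans km.
by rewrite -ler_pdivrMr // ltW.
Qed.

Lemma algo_theta_increment_cvg0 : (fun n => th_ n.+1 - th_ n) @ \oo --> 0.
Proof.
have [Cphi phiC] := algo_phi_bounded; have [Ce eC] := algo_e_bounded.
pose D := `|Cphi| * `|Ce|.
have D0 : 0 <= D by rewrite mulr_ge0.
apply/cvgr0Pnorm_le => eps eps_gt0.
have [m Sm] := algo_S_unbounded ((D + 1) / eps).
near=> n; rewrite algo_thetaS addrC addKr.
have [mn n0n] : (m <= n)%N /\ (n0 <= n)%N.
  by split; near: n; exact: nbhs_infty_ge.
have Sn : (D + 1) / eps <= S_ n := le_trans Sm (algo_S_le mn).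
have S_gt0 : 0 < S_ n by apply: lt_le_trans Sn; rewrite divr_gt0 //; lra.
have phie_le : `|phi_ n * e_ n.+1| <= D.
  rewrite normrM /D ler_pM //.
    exact: le_trans (phiC _ n0n) (ler_norm _).
  exact: le_trans (eC _ (leqW n0n)) (ler_norm _).
rewrite -mulrA normrM normfV (gtr0_norm S_gt0) mulrC ler_pdivrMr //.
rewrite ler_pdivrMr // in Sn; nra.
Unshelve. all: by end_near.
Qed.

Lemma theta_increment_cvg0 :
  (fun n => theta yv beta n.+1 - theta yv beta n) @ \oo --> 0.
Proof. by rewrite -cvg_shiftS; exact: algo_theta_increment_cvg0. Qed.

Lemma theta_bounded : bounded_near (theta yv beta) \oo.
Proof.
apply/ex_bound; exists 1; near=> n.
apply: le_trans (theta_le _) (ltW Ks_lt1).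
have n0n : (n0 < n)%N by near: n; exact: nbhs_infty_gt.
by rewrite -ltnS prednK // (leq_ltn_trans _ n0n).
Unshelve. all: by end_near.
Qed.

End recursive_algorithm.

Section real_probability.
Context {d : measure_display} {Omega : measurableType d} {R : realType}.
Variable P : probability Omega R.

Definition Pr (A : set Omega) : R := fine (P A).

Lemma PrE A : measurable A -> P A = (Pr A)%:E.
Proof. by move=> mA; rewrite /Pr fineK // fin_num_measure. Qed.

Lemma Pr_ge0 A : 0 <= Pr A.
Proof. by rewrite /Pr fine_ge0 // measure_ge0. Qed.

Lemma PrT : Pr setT = 1.
Proof. by rewrite /Pr probability_setT. Qed.

Lemma Pr_le A B : measurable A -> measurable B -> A `<=` B -> Pr A <= Pr B.
Proof.
by move=> mA mB AB; rewrite -lee_fin -!PrE //; apply: le_measure; rewrite ?inE.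
Qed.

Lemma PrU A B : measurable A -> measurable B -> A `&` B = set0 ->
  Pr (A `|` B) = Pr A + Pr B.
Proof.
move=> mA mB AB0; apply/eqP; rewrite -eqe EFinD -!PrE //; last exact: measurableU.
by rewrite measureU.
Qed.

Lemma Pr_setD_null A N : measurable A -> measurable N -> P N = 0%E ->
  Pr (A `\` N) = Pr A.
Proof.
move=> mA mN N0; apply: EFin_inj; rewrite -!PrE //; last exact: measurableD.
rewrite [RHS](measureDI _ mA mN) (@subset_measure0 _ _ _ _ (A `&` N) N) ?adde0 //.
exact: measurableI.
Qed.

End real_probability.

Section natural_filtration.
Context {d : measure_display} {Omega : measurableType d} {R : realType}.
Variable y : int -> Omega -> R.
Hypothesis y_meas : forall t, measurable_fun [set: Omega] (y t).

Definition natfilt_type (t : int) :=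
  g_sigma_algebraType [set A : set Omega | exists s : int, exists B : set R,
                 (s <= t)%R /\ measurable B /\ A = y s @^-1` B].

Lemma natfiltE t A : natfilt y t A = @measurable _ (natfilt_type t) A.
Proof. by []. Qed.

Lemma natfiltT t : natfilt y t setT.
Proof. by rewrite natfiltE; exact: measurableT. Qed.

Lemma natfiltI t A B : natfilt y t A -> natfilt y t B -> natfilt y t (A `&` B).
Proof. by rewrite !natfiltE; exact: measurableI. Qed.

Lemma natfiltC t A : natfilt y t A -> natfilt y t (~` A).
Proof. by rewrite !natfiltE; exact: measurableC. Qed.

Lemma natfilt_le s t : (s <= t)%R -> natfilt y s `<=` natfilt y t.
Proof.
move=> st; apply: sub_sigma_algebra2 => A [r [B [rs [mB ->]]]].
by exists r, B; split => //; exact: le_trans st.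
Qed.

Lemma natfilt_measurable t : natfilt y t `<=` measurable.
Proof.
apply: smallest_sub; first exact: sigma_algebra_measurable.
by move=> A [s [B [_ [mB ->]]]]; rewrite -[_ @^-1` _]setTI; exact: y_meas.
Qed.

Lemma natfilt_preimage t (f : Omega -> R) (B : set R) :
  @measurable_fun _ _ (natfilt_type t) R setT f -> measurable B ->
  natfilt y t (f @^-1` B).
Proof. by move=> mf mB; have := mf measurableT B mB; rewrite setTI. Qed.

Lemma natfilt_normr_lt t (c : R) : natfilt y t [set w | `|y t w| < c].
Proof.
apply: sub_sigma_algebra; exists t, `]-c, c[%classic; split => //; split.
  exact: measurable_itv.
by apply/seteqP; split => w /=; rewrite in_itv /= ltr_norml.
Qed.

End natural_filtration.

Section martingale_difference.
Context {d : measure_display} {Omega : measurableType d} {R : realType}.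
Variables (y eps : int -> Omega -> R) (kappa : nat -> R).
Hypothesis eps_adapted : forall t B, measurable B -> natfilt y t (eps t @^-1` B).

Lemma natfilt_past_sum_ge0 (t : int) (N : nat) :
  natfilt y (t - 1) [set w | 0 <= \sum_(1 <= s < N.+1) kappa s * eps (t - s%:Z) w].
Proof.
rewrite (_ : [set w | _] = (fun w => \sum_(0 <= s < N) kappa s.+1 * eps (t - s.+1%:Z) w)
   @^-1` `[0, +oo[%classic); last first.
  by apply/seteqP; split => w /=; rewrite in_itv /= andbT big_add1.
apply: natfilt_preimage; last exact: measurable_itv.
apply: measurable_sum => s; apply: measurable_funM; first exact: measurable_cst.
move=> _ B mB; rewrite setTI.
have le_ts : (t - s.+1%:Z <= t - 1)%R by rewrite lerB // lez_nat.
by rewrite -natfiltE; apply: (natfilt_le le_ts); exact: eps_adapted.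
Qed.

End martingale_difference.

Lemma quadratic_le_indicator (R : realFieldType) (x K delta : R) :
  `|x| <= K -> 0 < delta ->
  x ^+ 2 + K * x <= delta * (delta + K) + 2 * K ^+ 2 * (delta <= x)%R%:R.
Proof.
move=> /[dup] /ler_normlP[Nx Px] xK delta_gt0.
case: (lerP delta x) => [dx|xd] /=; rewrite ?mulr1 ?mulr0 ?addr0; first nra.
by case: (lerP x 0) => x0; nra.
Qed.

Lemma measurable_ge_set {d : measure_display} {T : measurableType d} {R : realType}
    (a : R) (f : T -> R) :
  measurable_fun setT f -> measurable [set w | a <= f w].
Proof.
move=> mf; rewrite (_ : [set w | _] = f @^-1` `[a, +oo[%classic); last first.
  by apply/seteqP; split => w /=; rewrite in_itv /= andbT.
by rewrite -[_ @^-1` _]setTI; apply: mf => //; exact: measurable_itv.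
Qed.

Section anti_concentration.
Context {d : measure_display} {Omega : measurableType d} {R : realType}.
Variable P : probability Omega R.

Lemma bounded_integrable (D : set Omega) (f : Omega -> R) (K : R) :
  measurable D -> measurable_fun D f -> (forall w, D w -> `|f w| <= K) ->
  P.-integrable D (fun w => (f w)%:E).
Proof.
move=> mD mf fK; apply: measurable_bounded_integrable => //.
  by rewrite (le_lt_trans (probability_le1 P mD)) ?ltry.
exists K; split; first by rewrite num_real.
by move=> M KM w Dw /=; rewrite (le_trans (fK w Dw)) // ltW.
Qed.

Variables (f : Omega -> R) (K s2 delta : R).
Hypothesis f_meas : measurable_fun setT f.
Hypotheses (delta_gt0 : 0 < delta) (delta_small : delta * (delta + K) <= s2 / 2).

Let measurable_f_ge : measurable [set w | delta <= f w] := measurable_ge_set _ f_meas.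

Lemma Pr_ge_of_centered_bounded (D : set Omega) : measurable D ->
  (forall w, D w -> `|f w| <= K) ->
  (\int[P]_(w in D) (f w)%:E = 0)%E ->
  (\int[P]_(w in D) (f w ^+ 2)%:E = s2%:E * P D)%E ->
  s2 / 2 * Pr P D <= 2 * K ^+ 2 * Pr P (D `&` [set w | delta <= f w]).
Proof.
move=> mD fK int_f int_f2.
set E := [set w | delta <= f w].
have mfD : measurable_fun D f := measurable_funS measurableT (@subsetT _ _) f_meas.
have i1 : P.-integrable D (fun w => (f w)%:E) := bounded_integrable mD mfD fK.
have i2 : P.-integrable D (fun w => (f w ^+ 2)%:E).
  apply: (bounded_integrable (K := K ^+ 2)) mD (measurable_funX _ mfD) _ => w Dw.
  by rewrite normrX lerXn2r ?nnegrE ?(le_trans (normr_ge0 _) (fK w Dw)) ?fK.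
have ic : P.-integrable D (fun=> (delta * (delta + K))%:E).
  exact: finite_measure_integrable_cst.
have iE : P.-integrable D (fun w => (\1_E w)%:E).
  by apply: (integrableS measurableT mD) => //; exact: integrable_indic.
(* integrate [quadratic_le_indicator]: the left side has integral s2 P(D) *)
pose g w := ((f w ^+ 2)%:E + K%:E * (f w)%:E)%E.
pose h w := ((delta * (delta + K))%:E + (2 * K ^+ 2)%:E * (\1_E w)%:E)%E.
have int_g : (\int[P]_(w in D) g w = s2%:E * P D)%E.
  by rewrite integralD ?integrableZl // integralZl // int_f int_f2 mule0 adde0.
have int_h : (\int[P]_(w in D) h w =
    (delta * (delta + K))%:E * P D + (2 * K ^+ 2)%:E * P (E `&` D))%E.
  by rewrite integralD ?integrableZl // integralZl // integral_indic // integral_cst.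
have : (\int[P]_(w in D) g w <= \int[P]_(w in D) h w)%E.
  apply: le_integral => //.
  - exact: (integrableD mD i2 (integrableZl mD K i1)).
  - exact: (integrableD mD ic (integrableZl mD (2 * K ^+ 2) iE)).
  move=> w /set_mem Dw; rewrite /g /h -!EFinM -!EFinD lee_fin indicE.
  rewrite (_ : (w \in E) = (delta <= f w)) ?quadratic_le_indicator ?fK //.
  by apply/idP/idP => [/set_mem|] //; exact: mem_set.
rewrite int_g int_h (PrE _ mD) (PrE _ (measurableI _ _ measurable_f_ge mD)).
rewrite -!EFinM -EFinD lee_fin setIC /E.
have := ler_wpM2r (Pr_ge0 P D) delta_small; lra.
Qed.

Lemma Pr_ge_of_centered_ae_bounded (A N : set Omega) :
  measurable A -> measurable N -> P N = 0%E ->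
  (forall w, ~ N w -> `|f w| <= K) ->
  (\int[P]_(w in A) (f w)%:E = 0)%E ->
  (\int[P]_(w in A) (f w ^+ 2)%:E = s2%:E * P A)%E ->
  s2 / 2 * Pr P A <= 2 * K ^+ 2 * Pr P (A `&` [set w | delta <= f w]).
Proof.
move=> mA mN PN0 fK int_f int_f2.
have mAN : measurable (A `\` N) := measurableD mA mN.
have fK' w : (A `\` N) w -> `|f w| <= K by case=> _; exact: fK.
have mf D : measurable_fun D f := measurable_funS measurableT (@subsetT _ _) f_meas.
have i1 : P.-integrable A (fun w => (f w)%:E).
  apply/(negligible_integrable mN mA _ PN0); first exact/measurable_EFinP.
  exact: bounded_integrable mAN (mf _) fK'.
have i2 : P.-integrable A (fun w => (f w ^+ 2)%:E).
  apply/(negligible_integrable mN mA _ PN0).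
    exact/measurable_EFinP/measurable_funX.
  apply: (bounded_integrable (K := K ^+ 2)) mAN (measurable_funX _ (mf _)) _.
  move=> w /fK' fwK.
  by rewrite normrX lerXn2r ?nnegrE ?(le_trans (normr_ge0 _) fwK).
have PAN : P (A `\` N) = P A by rewrite !PrE // Pr_setD_null.
have := @Pr_ge_of_centered_bounded _ mAN fK'.
rewrite -(negligible_integral mN mA i1 PN0) -(negligible_integral mN mA i2 PN0) PAN.
move=> /(_ int_f int_f2); rewrite Pr_setD_null // => /le_trans; apply.
have K2_ge0 : 0 <= 2 * K ^+ 2 by rewrite mulr_ge0 ?sqr_ge0.
rewrite ler_wpM2l //; apply: Pr_le; last by move=> w [[]].
- by apply: measurableI => //; exact: measurable_f_ge.
- by apply: measurableI => //; exact: measurable_f_ge.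
Qed.

End anti_concentration.

Lemma le0_of_le_geometric (R : realType) (x r : R) :
  0 <= r < 1 -> (forall m, x <= r ^+ m) -> x <= 0.
Proof.
move=> /andP[r0 r1] xr; have r_lt1 : `|r| < 1 by rewrite ger0_norm.
by apply: (cvgr_to_ge (cvg_expr r_lt1)); exact: nearW.
Qed.

Lemma norm_series_tail_le (R : realType) (a b : nat -> R) (la lb : R) :
  series a @ \oo --> la -> series b @ \oo --> lb -> (forall s, `|a s| <= b s) ->
  forall n, `|la - series a n| <= lb - series b n.
Proof.
move=> a_la b_lb ab n.
have b_ge0 s : 0 <= b s := le_trans (normr_ge0 _) (ab s).
have b_nd : nondecreasing_seq (series b).
  by apply/nondecreasing_seqP => m; rewrite /series /= big_nat_recr //= lerDl.
have b_le m : series b m <= lb.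
  by have := nondecreasing_cvgn_le b_nd (cvgP _ b_lb) m; rewrite (cvg_lim _ b_lb).
have : `|series a m - series a n| @[m --> \oo] --> `|la - series a n|.
  by apply: cvg_norm; apply: cvgB => //; exact: cvg_cst.
move/cvgr_to_le; apply; near=> m.
have nm : (n <= m)%N by near: m; exact: nbhs_infty_ge.
have := b_le m; rewrite /series /= (big_cat_nat _ nm) //= => b_le_m.
rewrite (big_cat_nat _ nm) //= addrC addrK.
apply: le_trans (ler_norm_sum _ _ _) _.
apply: (le_trans (y := \sum_(n <= s < m) b s)); first exact: ler_sum.
lra.
Unshelve. all: by end_near.
Qed.

Section moving_average.
Context {d : measure_display} {Omega : measurableType d} {R : realType}.
Variable P : probability Omega R.
Variables (y eps : int -> Omega -> R) (kappa : nat -> R) (sigma2 K lk : R).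
Variable N : set Omega.
Hypothesis y_meas : forall t, measurable_fun [set: Omega] (y t).
Hypothesis kappa0 : kappa 0%N = 1.
Hypothesis kappa_abs_summable : series (fun s => `|kappa s|) @ \oo --> lk.
Hypothesis eps_adapted : forall t B, measurable B -> natfilt y t (eps t @^-1` B).
Hypothesis eps_int : forall t, P.-integrable [set: Omega] (fun w => (eps t w)%:E).
Hypothesis eps_centered : forall t A, natfilt y (t - 1) A ->
  (\int[P]_(w in A) (eps t w)%:E = 0)%E.
Hypothesis eps_cond_var : forall t A, natfilt y (t - 1) A ->
  (\int[P]_(w in A) (eps t w ^+ 2)%:E = sigma2%:E * P A)%E.
Hypotheses (sigma2_gt0 : 0 < sigma2) (K_gt0 : 0 < K).
Hypotheses (mN : measurable N) (PN0 : P N = 0%E).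
Hypothesis eps_le : forall w, ~ N w -> forall t, `|eps t w| <= K.
Hypothesis y_ma : forall w, ~ N w -> forall n : nat,
  series (fun s => kappa s * eps (n%:Z - s%:Z) w) @ \oo --> y n%:Z w.

(* [delta <= K] and [delta * (delta + K) <= sigma2 / 2] make
   [Pr_ge_of_centered_ae_bounded] applicable, and it then yields the fraction
   [q = (sigma2 / 2) / (2 K^2)] *)
Let delta := Num.min K (sigma2 / (4 * K)).
Let q := sigma2 / (4 * K ^+ 2).
Definition ma_threshold := delta / 2.

Let delta_gt0 : 0 < delta.
Proof. by rewrite lt_min K_gt0 divr_gt0 // mulr_gt0. Qed.

Lemma ma_threshold_gt0 : 0 < ma_threshold.
Proof. exact: divr_gt0. Qed.

Let delta_small : delta * (delta + K) <= sigma2 / 2.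
Proof.
have dK : delta <= K by rewrite ge_min lexx.
have : delta * (4 * K) <= sigma2.
  by rewrite -ler_pdivlMr ?mulr_gt0 // ge_min lexx orbT.
have := delta_gt0; nra.
Qed.

Let q_gt0 : 0 < q.
Proof. by rewrite divr_gt0 // mulr_gt0 // exprn_gt0. Qed.

Lemma eps_measurable t : measurable_fun [set: Omega] (eps t).
Proof.
by move=> _ B mB; rewrite setTI; apply: (natfilt_measurable y_meas); exact: eps_adapted.
Qed.

Lemma Pr_innovation_ge (t : int) (B : set Omega) (sg : R) : `|sg| = 1 ->
  natfilt y (t - 1) B -> q * Pr P B <= Pr P (B `&` [set w | delta <= sg * eps t w]).
Proof.
move=> sg1 FB; have mB := natfilt_measurable y_meas FB.
have K2_gt0 : 0 < 2 * K ^+ 2 by rewrite mulr_gt0 // exprn_gt0.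
rewrite -(ler_pM2l K2_gt0) mulrA (_ : 2 * K ^+ 2 * q = sigma2 / 2); last first.
  by rewrite /q; field; rewrite lt0r_neq0.
have sg2 : sg ^+ 2 = 1 by rewrite -real_normK ?num_real // sg1 expr1n.
have meps : measurable_fun setT (fun w => sg * eps t w).
  exact/measurable_funM/eps_measurable/measurable_cst.
apply: (Pr_ge_of_centered_ae_bounded meps delta_gt0 delta_small mB mN PN0).
- by move=> w Nw; rewrite normrM sg1 mul1r eps_le.
- under eq_integral do rewrite EFinM.
  rewrite integralZl ?eps_centered ?mule0 //.
  exact: integrableS measurableT mB (@subsetT _ _) (eps_int t).
- by under eq_integral do rewrite exprMn sg2 mul1r; exact: eps_cond_var.
Qed.

Let q_le1 : q <= 1.
Proof.
have := @Pr_innovation_ge 1 setT 1 (normr1 _) (@natfiltT _ _ _ y _).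
rewrite PrT mulr1 => /le_trans.
apply; rewrite -(PrT P); apply: Pr_le => //; apply: measurableI => //.
exact/measurable_ge_set/measurable_funM/eps_measurable/measurable_cst.
Qed.

Let series_K_abs_kappa : series (fun s => K * `|kappa s|) @ \oo --> K * lk.
Proof.
rewrite (_ : series _ = fun m => K * series (fun s => `|kappa s|) m).
  exact: cvgMl_tmp.
by apply/funext => m; rewrite /series /= big_distrr.
Qed.

Let ma_term_le w (n : nat) s : ~ N w ->
  `|kappa s * eps (n%:Z - s%:Z) w| <= K * `|kappa s|.
Proof. by move=> Nw; rewrite normrM mulrC ler_wpM2r // eps_le. Qed.

Let past_sum (N : nat) (t : int) w := \sum_(1 <= s < N.+1) kappa s * eps (t - s%:Z) w.

Lemma y_near_innovation : exists n0, forall w, ~ N w -> forall n : nat,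
  `|y n%:Z w - (eps n%:Z w + past_sum n0 n%:Z w)| <= ma_threshold.
Proof.
have c_gt0 : 0 < ma_threshold / K by rewrite !divr_gt0.
have [n0 _ n0_tail] := cvgr_dist_le _ _ kappa_abs_summable _ c_gt0.
exists n0 => w Nw n.
have := norm_series_tail_le (@y_ma w Nw n) series_K_abs_kappa _ n0.+1.
rewrite /series /= (big_ltn (ltn0Sn n0)) kappa0 mul1r subr0 -/(past_sum n0 n%:Z w).
rewrite -big_distrr /= -mulrBr => /(_ _) /le_trans; apply.
  by move=> s; exact: ma_term_le.
rewrite mulrC -ler_pdivlMr //; apply: le_trans (ler_norm _) (n0_tail _ (leqnSn _)).
Qed.

Lemma small_y_innovation_lt : exists n0, forall w, ~ N w -> forall n : nat,
  `|y n%:Z w| < ma_threshold ->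
  (0 <= past_sum n0 n%:Z w -> eps n%:Z w < delta) /\
  (past_sum n0 n%:Z w < 0 -> - eps n%:Z w < delta).
Proof.
have [n0 y_near] := y_near_innovation; exists n0 => w Nw n.
move: (y_near w Nw n); rewrite /ma_threshold ler_norml ltr_norml.
by move=> /andP[? ?] /andP[? ?]; split => ?; lra.
Qed.

Lemma Pr_small_y_le (n : nat) (A : set Omega) : natfilt y (n%:Z - 1) A ->
  Pr P (A `&` [set w | `|y n%:Z w| < ma_threshold]) <= (1 - q) * Pr P A.
Proof.
move=> FA; have [n0 small_lt] := small_y_innovation_lt.
set c := ma_threshold; set t := n%:Z.
set F := [set w | 0 <= past_sum n0 t w].
have FF : natfilt y (t - 1) F := @natfilt_past_sum_ge0 _ _ _ y eps kappa eps_adapted t n0.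
set A1 := A `&` F; set A2 := A `&` ~` F.
have FA1 : natfilt y (t - 1) A1 := natfiltI FA FF.
have FA2 : natfilt y (t - 1) A2 := natfiltI FA (natfiltC FF).
have mA := natfilt_measurable y_meas FA.
have mA1 := natfilt_measurable y_meas FA1.
have mA2 := natfilt_measurable y_meas FA2.
set E1 := A1 `&` [set w | delta <= 1 * eps t w].
set E2 := A2 `&` [set w | delta <= -1 * eps t w].
have E1_ge := Pr_innovation_ge (normr1 _) FA1.
have E2_ge := Pr_innovation_ge (normrN1 _) FA2.
have mE (sg : R) (B : set Omega) : measurable B ->
    measurable (B `&` [set w | delta <= sg * eps t w]).
  move=> mB; apply: measurableI mB _.
  exact/measurable_ge_set/measurable_funM/eps_measurable/measurable_cst.
set X := (A `&` [set w | `|y t w| < c]) `\` N.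
have mX : measurable X.
  apply: measurableD mN; apply: measurableI mA _.
  by apply: (natfilt_measurable y_meas); exact: natfilt_normr_lt.
have XE1 : X `&` E1 = set0.
  apply/seteqP; split => w // [[[_ yc] Nw] [[_ pos] eps_ge]].
  move: eps_ge; rewrite /= mul1r => /(lt_le_trans ((small_lt w Nw n yc).1 pos)).
  by rewrite /t ltxx.
have XE2 : X `&` E2 = set0.
  apply/seteqP; split => w // [[[_ yc] Nw] [[_ /negP neg] eps_ge]].
  rewrite -ltNge in neg.
  move: eps_ge; rewrite /= mulN1r => /(lt_le_trans ((small_lt w Nw n yc).2 neg)).
  by rewrite /t ltxx.
have E1E2 : E1 `&` E2 = set0 by apply/seteqP; split => w // [[[_ ?] _] [[_ ?] _]].
have [mE1 mE2] : measurable E1 /\ measurable E2 by split; exact: mE.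
have PrXE : Pr P X + Pr P E1 + Pr P E2 <= Pr P A.
  have mXE1 : measurable (X `|` E1) by exact: measurableU.
  rewrite -PrU // -PrU //; last by rewrite setIUl XE2 E1E2 setU0.
  apply: Pr_le => //; first exact: measurableU.
  by move=> w [[[[Aw _] _]|[[Aw _] _]]|[[Aw _] _]].
have PrA : Pr P A = Pr P A1 + Pr P A2.
  rewrite -PrU //; last by apply/seteqP; split => w // [[_ ?] [_ ?]].
  by congr (Pr P _); rewrite -setIUr setUCr setIT.
have -> : Pr P (A `&` [set w | `|y t w| < c]) = Pr P X.
  rewrite Pr_setD_null //; apply: measurableI mA _.
  by apply: (natfilt_measurable y_meas); exact: natfilt_normr_lt.
rewrite mulrBl mul1r PrA mulrDr; lra.
Qed.

Lemma y_bounded w : ~ N w -> forall n : nat, `|y n%:Z w| <= K * lk.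
Proof.
move=> Nw n; have := norm_series_tail_le (@y_ma w Nw n) series_K_abs_kappa _ 0.
by rewrite /series /= !big_geq // !subr0; apply => s; exact: ma_term_le.
Qed.

Fixpoint small_run (n m : nat) : set Omega :=
  if m is m'.+1 then small_run n m' `&` [set w | `|y (n + m')%:Z w| < ma_threshold]
  else setT.

Lemma natfilt_small_run n m : natfilt y ((n + m)%:Z - 1) (small_run n m).
Proof.
elim: m => [|m IH] /=; first exact: natfiltT.
apply: natfiltI.
  by apply: natfilt_le IH; rewrite lerB // lez_nat leq_add2l.
rewrite (_ : _ - 1 = (n + m)%:Z); last by rewrite addnS -addn1 PoszD addrK.
exact: natfilt_normr_lt.
Qed.

Lemma Pr_small_run_le n m : Pr P (small_run n m) <= (1 - q) ^+ m.
Proof.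
elim: m => [|m IH]; first by rewrite /= PrT expr0.
rewrite /= exprS; apply: le_trans (Pr_small_y_le (natfilt_small_run (n := n) (m := m))) _.
by rewrite ler_wpM2l // subr_ge0 q_le1.
Qed.

Lemma ae_y_often_large :
  {ae P, forall w, forall n : nat, exists i : nat, ma_threshold <= `|y (n + i)%:Z w|}.
Proof.
pose small n := [set w | forall i : nat, `|y (n + i)%:Z w| < ma_threshold].
have m_small n : measurable (small n).
  rewrite (_ : small n = \bigcap_i [set w | `|y (n + i)%:Z w| < ma_threshold]).
    apply: bigcapT_measurable => i; apply: (natfilt_measurable y_meas).
    exact: natfilt_normr_lt.
  by apply/seteqP; split => w /= h; [move=> i _; exact: h | move=> i; exact: h i I].
have P_small n : P (small n) = 0%E.
  have le0 : Pr P (small n) <= 0.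
    apply: (@le0_of_le_geometric _ _ (1 - q)); first by rewrite subr_ge0 q_le1 /= gtrBl.
    move=> m; apply: le_trans (Pr_small_run_le n m); apply: Pr_le => //.
      by apply: (natfilt_measurable y_meas); exact: natfilt_small_run.
    by elim: m => [|m IH] w //= small_w; split; [exact: IH | exact: small_w].
  by rewrite PrE //; congr (_%:E); apply/le_anti; rewrite le0 Pr_ge0.
apply: (negligibleS _ (negligible_bigcup (F := small) _)).
  move=> w /= not_often; apply: contrapT => no_small; apply: not_often => n.
  apply: contrapT => never; apply: no_small; exists n => // i.
  by rewrite ltNge; apply/negP => ge; apply: never; exists i.
by move=> n; exists (small n); split => //; exact: P_small.
Qed.

End moving_average.

Lemma ae_y_bounded_often_large {d : measure_display} {Omega : measurableType d}
    {R : realType} (P : probability Omega R) (y eps : int -> Omega -> R)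
    (kappa : nat -> R) (sigma2 : R) :
  (forall t, measurable_fun [set: Omega] (y t)) ->
  kappa 0%N = 1 -> cvg (series (fun s => `|kappa s|) @ \oo) ->
  (forall t : int, {ae P, forall w,
     series (fun s => kappa s * eps (t - s%:Z) w) @ \oo --> y t w}) ->
  (forall t B, measurable B -> natfilt y t (eps t @^-1` B)) ->
  (forall t, P.-integrable [set: Omega] (fun w => (eps t w)%:E)) ->
  (forall t A, natfilt y (t - 1) A -> (\int[P]_(w in A) (eps t w)%:E = 0)%E) ->
  (forall t A, natfilt y (t - 1) A ->
     (\int[P]_(w in A) (eps t w ^+ 2)%:E = sigma2%:E * P A)%E) ->
  (exists K : R, {ae P, forall w, forall t, `|eps t w| <= K}) ->
  0 < sigma2 ->
  exists M c : R, 0 < c /\ {ae P, forall w,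
    (forall n : nat, `|y n%:Z w| <= M) /\
    (forall n : nat, exists m : nat, (n <= m)%N /\ c <= `|y m%:Z w|)}.
Proof.
move=> y_meas kappa0 kappa_sum y_ma eps_adapted eps_int eps_centered eps_var
  [K0 eps_K0] sigma2_gt0.
pose K := `|K0| + 1.
have K_gt0 : 0 < K by rewrite ltr_pwDr.
have good : {ae P, forall w, (forall t, `|eps t w| <= K) /\ forall n : nat,
    series (fun s => kappa s * eps (n%:Z - s%:Z) w) @ \oo --> y n%:Z w}.
  apply: filterS2 eps_K0 (ae_foralln (fun n => y_ma n)) => w epsK ma.
  by split => // t; rewrite (le_trans (epsK t)) // (le_trans (ler_norm _)) ?lerDl.
have [N [mN PN0 bad_N]] := good.
have N_good w : ~ N w -> (forall t, `|eps t w| <= K) /\ forall n : nat,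
    series (fun s => kappa s * eps (n%:Z - s%:Z) w) @ \oo --> y n%:Z w.
  by move=> Nw; apply: contrapT => bad; apply: Nw; exact: bad_N.
have eps_le w Nw := (N_good w Nw).1.
have ma w Nw := (N_good w Nw).2.
exists (K * lim (series (fun s => `|kappa s|) @ \oo)), (ma_threshold sigma2 K).
split; first exact: ma_threshold_gt0.
have notN : {ae P, forall w, ~ N w} by exists N; split => // w /= /contrapT.
apply: filterS2 notN (ae_y_often_large y_meas kappa0 kappa_sum eps_adapted eps_int
  eps_centered eps_var sigma2_gt0 K_gt0 mN PN0 eps_le ma) => w Nw often.
split; first exact: (y_bounded kappa_sum eps_le ma Nw).
by move=> n; have [i ?] := often n; exists (n + i)%N; rewrite leq_addr.
Qed.

Theorem lemma4p4 (d : measure_display) (Omega : measurableType d)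
  (R : realType) (P : probability Omega R)
  (y eps : int -> Omega -> R) (kappa : nat -> R) (sigma2 : R) (beta : R)
  (* y: real, mean-zero, covariance-stationary *)
  (y_meas : forall t, measurable_fun [set: Omega] (y t))
  (y_int : forall t, P.-integrable [set: Omega] (fun w => (y t w)%:E))
  (y_L2 : forall t, P.-integrable [set: Omega] (fun w => (y t w ^+ 2)%:E))
  (y_mean0 : forall t, (\int[P]_w (y t w)%:E = 0)%E)
  (y_cov : forall t h : int,
     (\int[P]_w (y t w * y (t + h)%R w)%:E = \int[P]_w (y 0 w * y h w)%:E)%E)
  (* (D1) *)
  (D1 : P [set w | 0 < y 1 w ^+ 2] = 1%E)
  (* (D2) *)
  (D2_k0 : kappa 0%N = 1)
  (D2_sum : cvg (series (fun s => `|kappa s|) @ \oo))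
  (D2_root : forall z : R[i], `|z| <= 1 ->
     ~ (series (fun s => kappa s * complex.Re (z ^+ s)) @ \oo --> 0 /\
        series (fun s => kappa s * complex.Im (z ^+ s)) @ \oo --> 0))
  (D2_ma : forall t : int,
     {ae P, forall w, series (fun s => kappa s * eps (t - s%:Z) w) @ \oo
                        --> y t w})
  (* eps is a martingale difference sequence w.r.t. F_t = sigma(y_s, s <= t) *)
  (mds_adapted : forall t : int, forall B : set R, measurable B ->
     natfilt y t (eps t @^-1` B))
  (mds_int : forall t, P.-integrable [set: Omega] (fun w => (eps t w)%:E))
  (mds_0 : forall (t : int) (A : set Omega), natfilt y (t - 1) A ->
     (\int[P]_(w in A) (eps t w)%:E = 0)%E)
  (* (D3) E[eps_t^2 | F_{t-1}] = sigma2 a.s. *)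
  (D3 : forall (t : int) (A : set Omega), natfilt y (t - 1) A ->
     (\int[P]_(w in A) (eps t w ^+ 2)%:E = sigma2%:E * P A)%E)
  (* (D4) *)
  (D4 : exists K : R, {ae P, forall w, forall t, `|eps t w| <= K})
  (* boundedness of theta after a random time *)
  (Htheta : exists (ks : Omega -> nat) (Ks : Omega -> R),
     (forall n, measurable [set w | ks w = n]) /\
     measurable_fun [set: Omega] Ks /\
     (forall w, 0 < Ks w < 1) /\
     {ae P, forall w, forall t : nat, (1 <= t)%N ->
        `|theta (fun n => y n%:Z w) beta (t + ks w)| <= Ks w})
  : (0 <= beta <= 1) ->
    forall (u : nat) (k : Omega -> nat),
    (forall n, measurable [set w | k w = n]) ->
    {ae P, forall w,
      let th := theta (fun n => y n%:Z w) beta in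
      (fun t : nat =>
         sigma2 / t%:R * \sum_(1 <= s < t.+1) \sum_(0 <= j < u.+1)
            kappa_phi th kappa beta s j ^+ 2
         - sigma2 / t%:R * \sum_(1 <= s < t.+1) \sum_(0 <= j < u.+1)
            kappa_lim kappa beta (th (s + k w)%N) j ^+ 2) @ \oo --> 0}.
Proof.
move=> beta01 u k _.
have sigma2_ge0 : 0 <= sigma2.
  have := D3 1 setT (@natfiltT _ _ _ y _); rewrite probability_setT mule1.
  by rewrite -lee_fin => <-; apply: integral_ge0 => w _; rewrite lee_fin sqr_ge0.
have [->|sigma2_neq0] := eqVneq sigma2 0.
  by apply: aeW => w /=; under eq_fun do rewrite !mul0r subrr; exact: cvg_cst.
have sigma2_gt0 : 0 < sigma2 by rewrite lt_neqAle eq_sym sigma2_neq0.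
have [M [c [c_gt0 y_ae]]] := ae_y_bounded_often_large y_meas D2_k0 D2_sum D2_ma
  mds_adapted mds_int mds_0 D3 D4 sigma2_gt0.
have [ks [Ks [_ [_ [Ks01 theta_ae]]]]] := Htheta.
apply: filterS2 y_ae theta_ae => w [yM y_often] theta_le.
have algo_theta_le n : (ks w <= n)%N ->
    `|st_theta (algo (fun n => y n%:Z w) beta n)| <= Ks w.
  move=> ksn; have := theta_le (n.+1 - ks w)%N; rewrite subnK ?leqW //.
  by apply; rewrite subn_gt0 ltnS.
have Ks_lt1 : Ks w < 1 by case/andP: (Ks01 w).
apply: mean_sum_sqr_kappa_phi_cvg.
- exact: theta_bounded Ks_lt1 algo_theta_le.
- exact: (@theta_increment_cvg0 _ (fun n => y n%:Z w) _ beta01 _ _ _ _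
    yM c_gt0 y_often Ks_lt1 algo_theta_le).
Qed.
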